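(* Consider the quantized sensor-network model described in the context, and assume all attacks are estimable, i.e. $\mathbf{J}_{\boldsymbol\tau^{(p)}}$ is nonsingular for every $p=1,\dots,P$; assume also that $\mathbf{J}_{\mathcal{A}_0}$ and $\mathbf{J}_{\boldsymbol\Theta}$ are nonsingular. Then the Cramér–Rao bound for $\boldsymbol\theta$ satisfies $$\big[\mathbf{J}_{\boldsymbol\Theta}^{-1}\big]_{1:D_{\boldsymbol\theta}}\preceq \mathbf{J}_{\mathcal{A}_0}^{-1}$$ in the positive semidefinite order, and equality holds if and only if for every $p=1,\dots,P$, $$\mathscr{R}\big(\mathbf{V}_{\boldsymbol\theta^{(p)}}\boldsymbol\Lambda_{\boldsymbol\theta^{(p)}}^T\big)\subseteq\mathscr{R}\big(\mathbf{V}_{\boldsymbol\tau^{(p)}}\boldsymbol\Lambda_{\boldsymbol\tau^{(p)}}^T\big).$$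
   Context: Sensors are indexed by $j\in\{1,\dots,N\}$. Sensor $j$ acquires $K_j$ scalar measurements $\tilde x_{jk}$, $k=1,\dots,K_j$, each quantized by an $R_j$-level quantizer with fixed disjoint regions $I_j^{(1)},\dots,I_j^{(R_j)}$ partitioning $\mathbb{R}$, producing $\tilde u_{jk}=\sum_{r=1}^{R_j} r\,\mathbb{1}\{\tilde x_{jk}\in I_j^{(r)}\}$. The sensor set is partitioned into disjoint sets $\mathcal{A}_0$ (unattacked) and $\mathcal{A}_1,\dots,\mathcal{A}_P$ (attacked, grouped by attack). Unknown deterministic parameters: $\boldsymbol\theta\in\mathbb{R}^{D_{\boldsymbol\theta}}$ and $\boldsymbol\tau^{(p)}\in\mathbb{R}^{D_p}$, $p=1,\dots,P$. The $\{\tilde x_{jk}\}$ are independent; $\tilde x_{jk}$ has pdf $f_{jk}(\cdot\mid\boldsymbol\theta)$ if $j\in\mathcal{A}_0$ and $g_{jk}(\cdot\mid\boldsymbol\theta,\boldsymbol\tau^{(p)})$ if $j\in\mathcal{A}_p$, $p\ge1$. Let $p_{jr}^{(k)}=\Pr(\tilde u_{jk}=r)$ (the integral of the corresponding pdf over $I_j^{(r)}$), assumed positive and differentiable in the parameters. Let $\boldsymbol\Theta=[\boldsymbol\theta^T,(\boldsymbol\tau^{(1)})^T,\dots,(\boldsymbol\tau^{(P)})^T]^T$ and $\mathbf{J}_{\boldsymbol\Theta}=\sum_{j=1}^N\sum_{k=1}^{K_j}\sum_{r=1}^{R_j}\frac{1}{p_{jr}^{(k)}}\frac{\partial p_{jr}^{(k)}}{\partial\boldsymbol\Theta}\big[\frac{\partial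 p_{jr}^{(k)}}{\partial\boldsymbol\Theta}\big]^T$ (the Fisher information matrix of the quantized data). For $p\ge0$, $\mathbf{J}_{\mathcal{A}_p}=\sum_{j\in\mathcal{A}_p}\sum_{k}\sum_{r}\frac{1}{p_{jr}^{(k)}}\frac{\partial p_{jr}^{(k)}}{\partial\boldsymbol\theta}\big[\frac{\partial p_{jr}^{(k)}}{\partial\boldsymbol\theta}\big]^T$, and for $p\ge1$, $\mathbf{J}_{\boldsymbol\tau^{(p)}}=\sum_{j\in\mathcal{A}_p}\sum_{k}\sum_{r}\frac{1}{p_{jr}^{(k)}}\frac{\partial p_{jr}^{(k)}}{\partial\boldsymbol\tau^{(p)}}\big[\frac{\partial p_{jr}^{(k)}}{\partial\boldsymbol\tau^{(p)}}\big]^T$. For $p\ge1$, let $M_p=\sum_{j\in\mathcal{A}_p}K_jR_j$ and define $\boldsymbol\Phi_{\boldsymbol\theta^{(p)}}\in\mathbb{R}^{D_{\boldsymbol\theta}\times M_p}$ and $\boldsymbol\Phi_{\boldsymbol\tau^{(p)}}\in\mathbb{R}^{D_p\times M_p}$ as the matrices whose columns, indexed by the triples $(j,k,r)$ with $j\in\mathcal{A}_p$, $1\le k\le K_j$, $1\le r\le R_j$ (in the same fixed order for both matrices), are respectively $(p_{jr}^{(k)})^{-1/2}\,\partial p_{jr}^{(k)}/\partial\boldsymbol\theta$ and $(p_{jr}^{(k)})^{-1/2}\,\partial p_{jr}^{(k)}/\partial\boldsymbol\tau^{(p)}$. Let $\boldsymbol\Phi_{\boldsymbol\theta^{(p)}}=\mathbf{U}_{\boldsymbol\theta^{(p)}}\boldsymbol\Lambda_{\boldsymbol\theta^{(p)}}\mathbf{V}_{\boldsymbol\theta^{(p)}}^T$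 and $\boldsymbol\Phi_{\boldsymbol\tau^{(p)}}=\mathbf{U}_{\boldsymbol\tau^{(p)}}\boldsymbol\Lambda_{\boldsymbol\tau^{(p)}}\mathbf{V}_{\boldsymbol\tau^{(p)}}^T$ be singular value decompositions. $\mathscr{R}(\cdot)$ denotes range (column space), $[\mathbf{A}]_{1:D}$ denotes the leading $D\times D$ principal submatrix, and $\preceq$ is the positive semidefinite (Loewner) order. *)

From HB Require Import structures.
From mathcomp Require Import all_boot all_order all_algebra.
From mathcomp Require Import all_classical all_reals all_analysis.
Import Order.TTheory GRing.Theory Num.Theory numFieldNormedType.Exports.

Unset Printing Implicit Defensive.

Local Open Scope classical_set_scope.
Local Open Scope ring_scope.

Definition is_pdf (R : realType) (pdf : R -> R) : Prop :=
  [/\ measurable_fun setT pdf, (forall x, 0 <= pdf x) &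
      (\int[@lebesgue_measure R]_x (pdf x)%:E = 1)%E].

Definition cell_prob (R : realType) (pdf : R -> R) (I : set R) : R :=
  fine (\int[@lebesgue_measure R]_(x in I) (pdf x)%:E).

Definition quantizer_regions (R : realType) (n : nat) (I : 'I_n -> set R) : Prop :=
  [/\ forall r, measurable (I r),
      forall r s, r != s -> I r `&` I s = set0 &
      \bigcup_(r in [set: 'I_n]) I r = [set: R]].

Definition grad (R : realType) (n : nat) (h : 'rV[R]_n -> R) (x : 'rV[R]_n)
  : 'cV[R]_n := \col_i ('D_(delta_mx 0 i) h x).

Definition psd (R : realType) (n : nat) (A : 'M[R]_n) : Prop :=
  A^T = A /\ forall v : 'cV[R]_n, 0 <= (v^T *m A *m v) 0 0.
Definition loewner_le (R : realType) (n : nat) (A B : 'M[R]_n) : Prop :=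
  @psd R n (B - A).

(* Range (column space) inclusion: R(A) is contained in R(B). *)
Definition range_sub (R : realType) (m n1 n2 : nat)
  (A : 'M[R]_(m, n1)) (B : 'M[R]_(m, n2)) : bool := (A^T <= B^T)%MS.

Definition is_svd (R : realType) (m n : nat) (A : 'M[R]_(m, n))
  (U : 'M[R]_m) (S : 'M[R]_(m, n)) (V : 'M[R]_n) : Prop :=
  [/\ U^T *m U = 1%:M, V^T *m V = 1%:M,
      forall (i : 'I_m) (j : 'I_n), nat_of_ord i <> nat_of_ord j -> S i j = 0,
      forall (i : 'I_m) (j : 'I_n), nat_of_ord i = nat_of_ord j -> 0 <= S i j &
      A = U *m S *m V^T].

Arguments psd {R n}.
Arguments loewner_le {R n}.
Arguments range_sub {R m n1 n2}.
Arguments is_svd {R m n}.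
Arguments grad {R n}.
Arguments cell_prob {R}.
Arguments is_pdf {R}.
Arguments quantizer_regions {R n}.

Section Model.
Context (R : realType).
Context (N P Dth : nat) (D : 'I_P -> nat).
(* K j = number of measurements of sensor j, Rl j = number of quantizer levels *)
Context (K Rl : 'I_N -> nat).
(* grp j = None : j in A_0 ; grp j = Some p : j in A_(p+1) (attack index p : 'I_P) *)
Context (grp : 'I_N -> option 'I_P).
Context (I : forall j : 'I_N, 'I_(Rl j) -> set R).
Context (f : forall j : 'I_N, 'I_(K j) -> 'rV[R]_Dth -> R -> R).
Context (g : forall (j : 'I_N) (k : 'I_(K j)) (p : 'I_P),
              'rV[R]_Dth -> 'rV[R]_(D p) -> R -> R).
(* the parameter point at which the FIM is evaluated *)
Context (th0 : 'rV[R]_Dth) (tau0 : forall p : 'I_P, 'rV[R]_(D p)).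

Definition probA0 (j : 'I_N) (k : 'I_(K j)) (r : 'I_(Rl j)) (th : 'rV[R]_Dth) : R :=
  cell_prob (f j k th) (I j r).
Definition probA (j : 'I_N) (k : 'I_(K j)) (p : 'I_P) (r : 'I_(Rl j))
  (th : 'rV[R]_Dth) (t : 'rV[R]_(D p)) : R :=
  cell_prob (g j k p th t) (I j r).

Definition prob (j : 'I_N) (k : 'I_(K j)) (r : 'I_(Rl j)) : R :=
  match grp j with
  | None => probA0 j k r th0
  | Some p => probA j k p r th0 (tau0 p)
  end.

Definition dprob_th (j : 'I_N) (k : 'I_(K j)) (r : 'I_(Rl j)) : 'cV[R]_Dth :=
  match grp j with
  | None => grad (fun th => probA0 j k r th) th0
  | Some p => grad (fun th => probA j k p r th (tau0 p)) th0
  end.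

Definition dprob_tau (j : 'I_N) (k : 'I_(K j)) (r : 'I_(Rl j)) (q : 'I_P)
  : 'cV[R]_(D q) :=
  if grp j == Some q then grad (fun t => probA j k q r th0 t) (tau0 q) else 0.

Definition dprob_Th (j : 'I_N) (k : 'I_(K j)) (r : 'I_(Rl j))
  : 'cV[R]_(Dth + \sum_(q < P) D q) :=
  col_mx (dprob_th j k r) (mxcol (fun q => dprob_tau j k r q)).

Definition J_Theta : 'M[R]_(Dth + \sum_(q < P) D q) :=
  \sum_(j < N) \sum_(k < K j) \sum_(r < Rl j)
     (prob j k r)^-1 *: (dprob_Th j k r *m (dprob_Th j k r)^T).

Definition J_A (a : option 'I_P) : 'M[R]_Dth :=
  \sum_(j < N | grp j == a) \sum_(k < K j) \sum_(r < Rl j)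
     (prob j k r)^-1 *: (dprob_th j k r *m (dprob_th j k r)^T).

Definition J_tau (p : 'I_P) : 'M[R]_(D p) :=
  \sum_(j < N | grp j == Some p) \sum_(k < K j) \sum_(r < Rl j)
     (prob j k r)^-1 *: (dprob_tau j k r p *m (dprob_tau j k r p)^T).

(* triples (j,k,r) with j in A_p, in the fixed order [enum] *)
Definition triple := {j : 'I_N & ('I_(K j) * 'I_(Rl j))%type}.
Definition triples (p : 'I_P) := [set x : triple | grp (tag x) == Some p].
Definition Mp (p : 'I_P) : nat := #|triples p|.

Definition Phi_th (p : 'I_P) : 'M[R]_(Dth, Mp p) :=
  \matrix_(i, c) let x := enum_val c in
     (Num.sqrt (prob (tag x) (tagged x).1 (tagged x).2))^-1 *
     dprob_th (tag x) (tagged x).1 (tagged x).2 i 0.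

Definition Phi_tau (p : 'I_P) : 'M[R]_(D p, Mp p) :=
  \matrix_(i, c) let x := enum_val c in
     (Num.sqrt (prob (tag x) (tagged x).1 (tagged x).2))^-1 *
     dprob_tau (tag x) (tagged x).1 (tagged x).2 p i 0.

End Model.

Arguments probA0 {R N Dth}.
Arguments probA {R N P Dth}.
Arguments prob {R N P Dth}.
Arguments dprob_th {R N P Dth}.
Arguments dprob_tau {R N P Dth}.
Arguments dprob_Th {R N P Dth}.
Arguments J_Theta {R N P Dth}.
Arguments J_A {R N P Dth}.
Arguments J_tau {R N P Dth}.
Arguments Mp {N P}.
Arguments Phi_th {R N P Dth}.
Arguments Phi_tau {R N P Dth}.

From HB Require Import structures.
From mathcomp Require Import all_boot all_order all_algebra.
From mathcomp Require Import all_classical all_reals all_analysis.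
Import Order.TTheory GRing.Theory Num.Theory numFieldNormedType.Exports.
Local Open Scope classical_set_scope.
Local Open Scope ring_scope.

(* Weighting each score vector by the inverse square root of its cell
   probability, J_Theta becomes a Gram matrix.  Since d p / d tau^(q) vanishes
   off the sensors of attack q, it has the block form
     [ J_A0 + \sum_p Phi_th^(p) Phi_th^(p)^T    row_p (Phi_th^(p) Phi_tau^(p)^T) ]
     [ col_p (Phi_tau^(p) Phi_th^(p)^T)         diag_p (Phi_tau^(p) Phi_tau^(p)^T) ]
   and its Schur complement with respect to the (invertible, block diagonal)
   tau block is J_A0 + M, where M = \sum_p E_p E_p^T and E_p is the residual of
   the rows of Phi_th^(p) after projection onto the row space of Phi_tau^(p).
   Hence [J_Theta^-1]_{1:D} = (J_A0 + M)^-1, which is below J_A0^-1 because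
   M is positive semidefinite, with equality iff M = 0, i.e. iff every E_p
   vanishes, i.e. iff the row space of Phi_th^(p) lies in that of Phi_tau^(p).
   The singular value decompositions identify these row spaces with the
   ranges of V Lambda^T. *)

Lemma scale_mxcol (R : pzRingType) (P : nat) (d : 'I_P -> nat) n (c : R)
    (B : forall p, 'M[R]_(d p, n)) :
  c *: mxcol B = mxcol (fun p => c *: B p).
Proof. by apply/matrixP => i j; rewrite !mxE. Qed.

Lemma sum_block_mx (V : nmodType) (I : finType) (Q : pred I) m1 m2 n1 n2
    (A : I -> 'M[V]_(m1, n1)) (B : I -> 'M[V]_(m1, n2))
    (C : I -> 'M[V]_(m2, n1)) (E : I -> 'M[V]_(m2, n2)) :
  \sum_(i | Q i) block_mx (A i) (B i) (C i) (E i) =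
  block_mx (\sum_(i | Q i) A i) (\sum_(i | Q i) B i)
           (\sum_(i | Q i) C i) (\sum_(i | Q i) E i).
Proof.
elim: (index_enum I) => [|i s IH]; first by rewrite !big_nil block_mx0.
by rewrite !big_cons IH; case: (Q i); rewrite ?add_block_mx.
Qed.

Lemma sum_option_partition {V : nmodType} {I J : finType}
    (key : I -> option J) (F : I -> V) :
  \sum_i F i = \sum_(i | key i == None) F i + \sum_j \sum_(i | key i == Some j) F i.
Proof.
rewrite (partition_big key xpredT) //= (bigD1 None) //=; congr (_ + _).
rewrite (reindex_omap Some id); last by move=> [j|].
by apply: eq_bigl => j; rewrite eqxx.
Qed.

Lemma invmx_addr_eq (R : comUnitRingType) n (A M : 'M[R]_n) :
  invmx (A + M) = invmx A <-> M = 0.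
Proof.
split=> [|->]; last by rewrite addr0.
by move=> /(congr1 invmx); rewrite !invmxK -{2}[A]addr0 => /addrI.
Qed.

Section BlockDiag.
Context {R : comUnitRingType} {P : nat} {d : 'I_P -> nat}.

Lemma mul_mxdiag (A B : forall p, 'M[R]_(d p)) :
  mxdiag A *m mxdiag B = mxdiag (fun p => A p *m B p).
Proof.
rewrite {2}/mxdiag mul_mxdiag_mxblock /mxdiag; apply: eq_mxblock => p q.
by case: eqVneq => [<-|_]; rewrite ?conform_mx_id ?mulmx0.
Qed.

Lemma mxdiag_unitmx {A : forall p, 'M[R]_(d p)} :
  (forall p, A p \in unitmx) -> mxdiag A \in unitmx.
Proof.
move=> uA; suff /mulmx1_unit[] : mxdiag A *m mxdiag (fun p => invmx (A p)) = 1%:M by [].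
by rewrite mul_mxdiag -mxdiagZ; apply: eq_mxdiag => p; rewrite mulmxV.
Qed.

Lemma invmx_mxdiag_mul_mxcol n (A : forall p, 'M[R]_(d p)) (C : forall p, 'M[R]_(d p, n)) :
  (forall p, A p \in unitmx) ->
  invmx (mxdiag A) *m mxcol C = mxcol (fun p => invmx (A p) *m C p).
Proof.
move=> uA; rewrite -[RHS](mulKmx (mxdiag_unitmx uA)) mul_mxdiag_mxcol.
by congr (_ *m _); apply: eq_mxcol => p; rewrite mulKVmx.
Qed.

End BlockDiag.

Section Schur.
Context {R : comUnitRingType} {m1 m2 : nat} (J : 'M[R]_(m1 + m2)).
Hypotheses (uJ : J \in unitmx) (uD : drsubmx J \in unitmx).

Definition schur_compl : 'M[R]_m1 :=
  ulsubmx J - ursubmx J *m invmx (drsubmx J) *m dlsubmx J.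

Lemma mul_schur_compl_ulsubmx_invmx : schur_compl *m ulsubmx (invmx J) = 1%:M.
Proof.
have := mulmxV uJ; rewrite -{1}(submxK J) -{1}(submxK (invmx J)) mulmx_block.
rewrite scalar_mx_block => /eq_block_mx [e_ul _ e_dl _].
have e_Y : dlsubmx (invmx J) = - (invmx (drsubmx J) *m dlsubmx J *m ulsubmx (invmx J)).
  apply/eqP; rewrite -addr_eq0 -mulmxA -[X in X + _](mulKmx uD) -mulmxDr addrC.
  by rewrite e_dl mulmx0.
by rewrite /schur_compl mulmxBl -e_ul e_Y mulmxN !mulmxA.
Qed.

Lemma schur_compl_unitmx : schur_compl \in unitmx.
Proof. by case: (mulmx1_unit mul_schur_compl_ulsubmx_invmx). Qed.

Lemma ulsubmx_invmx : ulsubmx (invmx J) = invmx schur_compl.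
Proof.
by rewrite -[LHS](mulKmx schur_compl_unitmx) mul_schur_compl_ulsubmx_invmx mulmx1.
Qed.

End Schur.

Section RowResidual.
Context {R : fieldType} {n k d : nat} (X : 'M[R]_(n, k)) (Y : 'M[R]_(d, k)).
Hypothesis uYY : Y *m Y^T \in unitmx.

Definition row_residual : 'M[R]_(n, k) :=
  X - X *m Y^T *m invmx (Y *m Y^T) *m Y.

Lemma row_residual_gram :
  row_residual *m row_residual^T =
  X *m X^T - X *m Y^T *m invmx (Y *m Y^T) *m (Y *m X^T).
Proof.
have sYYi : (invmx (Y *m Y^T))^T = invmx (Y *m Y^T) by rewrite trmx_inv trmx_mul trmxK.
set G := X *m Y^T *m invmx (Y *m Y^T) *m (Y *m X^T).
rewrite /row_residual linearB /= mulmxBl !mulmxBr !trmx_mul !trmxK sYYi.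
have -> : X *m (Y^T *m (invmx (Y *m Y^T) *m (Y *m X^T))) = G by rewrite /G !mulmxA.
have -> : X *m Y^T *m invmx (Y *m Y^T) *m Y *m
           (Y^T *m (invmx (Y *m Y^T) *m (Y *m X^T))) = G.
  by rewrite /G !mulmxA -[_ *m Y *m Y^T]mulmxA mulmxKV.
by rewrite -[_ *m Y *m X^T]mulmxA subrr subr0.
Qed.

Lemma row_residual_eq0 : (row_residual == 0) = (X <= Y)%MS.
Proof.
rewrite /row_residual; apply/eqP/idP => [/eqP|/submxP[W ->]].
  by rewrite subr_eq0 => /eqP ->; apply: submxMl.
by rewrite -[W *m Y *m Y^T]mulmxA mulmxK // subrr.
Qed.

End RowResidual.

Section SumOfSquares.
Context {R : realDomainType}.

Lemma mxtrace_mulmx_tr m n (X : 'M[R]_(m, n)) :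
  \tr (X *m X^T) = \sum_i \sum_j X i j ^+ 2.
Proof. by apply: eq_bigr => i _; rewrite mxE; apply: eq_bigr => j _; rewrite mxE. Qed.

Lemma mxtrace_mulmx_tr_ge0 m n (X : 'M[R]_(m, n)) : 0 <= \tr (X *m X^T).
Proof. by rewrite mxtrace_mulmx_tr; do 2![apply: sumr_ge0 => ? _]; apply: sqr_ge0. Qed.

Lemma mxtrace_mulmx_tr_eq0 m n (X : 'M[R]_(m, n)) : \tr (X *m X^T) = 0 -> X = 0.
Proof.
rewrite mxtrace_mulmx_tr => /eqP; rewrite psumr_eq0 => [/allP X0|]; last first.
  by move=> i _; apply: sumr_ge0 => j _; apply: sqr_ge0.
apply/matrixP => i j; move/implyP: (X0 i (mem_index_enum i)) => /(_ isT).
rewrite psumr_eq0 => [/allP/(_ j (mem_index_enum j))|]; last by move=> *; apply: sqr_ge0.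
by rewrite sqrf_eq0 mxE => /eqP.
Qed.

Lemma sum_mulmx_tr_eq0 (I : finType) m (n : I -> nat) (X : forall i, 'M[R]_(m, n i)) :
  \sum_i X i *m (X i)^T = 0 -> forall i, X i = 0.
Proof.
move=> /(congr1 mxtrace); rewrite raddf_sum mxtrace0 => /eqP.
rewrite psumr_eq0 => [/allP X0 i|i _]; last exact: mxtrace_mulmx_tr_ge0.
by apply: mxtrace_mulmx_tr_eq0; apply/eqP; move/implyP: (X0 i (mem_index_enum i)); apply.
Qed.

End SumOfSquares.

Section Psd.
Context {R : realType}.

Lemma psd0 n : psd (0 : 'M[R]_n).
Proof. by split=> [|v]; rewrite ?trmx0 // mulmx0 mul0mx mxE. Qed.

Lemma psdD n (A B : 'M[R]_n) : psd A -> psd B -> psd (A + B).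
Proof.
move=> [sA pA] [sB pB]; split=> [|v]; first by rewrite linearD /= sA sB.
by rewrite mulmxDr mulmxDl mxE addr_ge0.
Qed.

Lemma psd_sum (I : finType) (Q : pred I) n (F : I -> 'M[R]_n) :
  (forall i, Q i -> psd (F i)) -> psd (\sum_(i | Q i) F i).
Proof. by move=> psdF; elim/big_rec: _ => [|i A /psdF]; [apply: psd0 | apply: psdD]. Qed.

Lemma psdZ n (c : R) (A : 'M[R]_n) : 0 <= c -> psd A -> psd (c *: A).
Proof.
move=> c_ge0 [sA pA]; split=> [|v]; first by rewrite linearZ /= sA.
by rewrite -scalemxAr -scalemxAl mxE mulr_ge0.
Qed.

Lemma psd_mulmx_tr m n (X : 'M[R]_(m, n)) : psd (X *m X^T).
Proof.
split=> [|v]; first by rewrite trmx_mul trmxK.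
have -> : v^T *m (X *m X^T) *m v = (X^T *m v)^T *m (X^T *m v).
  by rewrite trmx_mul trmxK !mulmxA.
by rewrite mxE; apply: sumr_ge0 => i _; rewrite mxE -expr2 sqr_ge0.
Qed.

Lemma psd_congr m n (A : 'M[R]_m) (X : 'M[R]_(m, n)) : psd A -> psd (X^T *m A *m X).
Proof.
move=> [sA pA]; split=> [|v]; first by rewrite !trmx_mul trmxK sA mulmxA.
by have := pA (X *m v); rewrite trmx_mul !mulmxA.
Qed.

Lemma psd_invmx n (A : 'M[R]_n) : psd A -> A \in unitmx -> psd (invmx A).
Proof.
move=> [sA pA] uA; have sAi : (invmx A)^T = invmx A by rewrite trmx_inv sA.
split=> // v; have := pA (invmx A *m v).
by rewrite trmx_mul sAi -!mulmxA mulKmx.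
Qed.

Lemma loewner_le_invmx_addr n (A M : 'M[R]_n) :
  psd A -> psd M -> A \in unitmx -> A + M \in unitmx ->
  loewner_le (invmx (A + M)) (invmx A).
Proof.
move=> psdA psdM uA uAM; have [sA _] := psdA; have [sM _] := psdM.
set Z := invmx (A + M).
have sZ : Z^T = Z by rewrite trmx_inv linearD /= sA sM.
have ZAM : Z *m (A + M) = 1%:M by rewrite mulVmx.
have AMZ : (A + M) *m Z = 1%:M by rewrite mulmxV.
rewrite /loewner_le.
(* A^-1 - Z = Z M A^-1 = Z M Z + (M Z)^T A^-1 (M Z), a sum of congruent psd matrices. *)
have -> : invmx A - Z = Z^T *m M *m Z + (M *m Z)^T *m invmx A *m (M *m Z).
  have -> : invmx A - Z = Z *m M *m invmx A.
    rewrite -{1}[invmx A]mul1mx -ZAM mulmxDr mulmxDl -[Z *m A *m _]mulmxA mulmxV //.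
    by rewrite mulmx1 addrC addKr.
  rewrite sZ trmx_mul sM sZ -[LHS]mulmx1 -AMZ mulmxDl mulmxDr.
  by rewrite !mulmxA -[Z *m M *m invmx A *m A]mulmxA mulVmx // mulmx1.
by apply: psdD; apply: psd_congr => //; apply: psd_invmx.
Qed.

End Psd.

Section GramBlock.
Context {R : realType} {n P : nat} {d m : 'I_P -> nat}.
Variables (A0 : 'M[R]_n) (Ph : forall p, 'M[R]_(n, m p)) (Pt : forall p, 'M[R]_(d p, m p)).

Definition gram_block : 'M[R]_(n + \sum_p d p) :=
  block_mx (A0 + \sum_p Ph p *m (Ph p)^T) (mxrow (fun p => Ph p *m (Pt p)^T))
           (mxcol (fun p => Pt p *m (Ph p)^T)) (mxdiag (fun p => Pt p *m (Pt p)^T)).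

Definition residual_gram : 'M[R]_n :=
  \sum_p row_residual (Ph p) (Pt p) *m (row_residual (Ph p) (Pt p))^T.

Hypothesis uPt : forall p, Pt p *m (Pt p)^T \in unitmx.
Hypothesis uJ : gram_block \in unitmx.

Lemma schur_compl_gram_block : schur_compl gram_block = A0 + residual_gram.
Proof.
rewrite /schur_compl block_mxKul block_mxKur block_mxKdl block_mxKdr.
rewrite -mulmxA invmx_mxdiag_mul_mxcol // mul_mxrow_mxcol -addrA -sumrB.
by congr (_ + _); apply: eq_bigr => p _; rewrite row_residual_gram // !mulmxA.
Qed.

Lemma drsubmx_gram_block_unitmx : drsubmx gram_block \in unitmx.
Proof. by rewrite block_mxKdr mxdiag_unitmx. Qed.

Lemma ulsubmx_invmx_gram_block : ulsubmx (invmx gram_block) = invmx (A0 + residual_gram).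
Proof.
by rewrite ulsubmx_invmx ?schur_compl_gram_block //; apply: drsubmx_gram_block_unitmx.
Qed.

Hypotheses (psdA0 : psd A0) (uA0 : A0 \in unitmx).

Lemma loewner_le_ulsubmx_invmx_gram_block :
  loewner_le (ulsubmx (invmx gram_block)) (invmx A0).
Proof.
have := schur_compl_unitmx _ uJ drsubmx_gram_block_unitmx.
rewrite ulsubmx_invmx_gram_block schur_compl_gram_block => uS.
by apply: loewner_le_invmx_addr => //; apply: psd_sum => p _; apply: psd_mulmx_tr.
Qed.

Lemma ulsubmx_invmx_gram_block_eq :
  ulsubmx (invmx gram_block) = invmx A0 <-> forall p, (Ph p <= Pt p)%MS.
Proof.
rewrite ulsubmx_invmx_gram_block invmx_addr_eq.
split=> [/sum_mulmx_tr_eq0 res0 p | sub_p]; first by rewrite -row_residual_eq0 ?res0.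
apply: big1 => p _; move/(_ p): sub_p.
by rewrite -row_residual_eq0 // => /eqP ->; rewrite mul0mx.
Qed.

End GramBlock.

Lemma is_svd_eqmx {R : realType} {m n} {A : 'M[R]_(m, n)} {U S V} :
  is_svd A U S V -> (A :=: (V *m S^T)^T)%MS.
Proof.
move=> [UtU _ _ _ ->]; apply/eqmxP/andP; rewrite trmx_mul trmxK; split.
  by rewrite -mulmxA submxMl.
by apply/submxP; exists U^T; rewrite !mulmxA UtU mul1mx.
Qed.

Section Model.
Context {R : realType} {N P Dth : nat} {D : 'I_P -> nat} {K Rl : 'I_N -> nat}.
Context {grp : 'I_N -> option 'I_P} {I : forall j : 'I_N, 'I_(Rl j) -> set R}.
Context {f : forall j : 'I_N, 'I_(K j) -> 'rV[R]_Dth -> R -> R}.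
Context {g : forall (j : 'I_N) (k : 'I_(K j)) (p : 'I_P),
              'rV[R]_Dth -> 'rV[R]_(D p) -> R -> R}.
Context {th0 : 'rV[R]_Dth} {tau0 : forall p : 'I_P, 'rV[R]_(D p)}.

Local Notation triple := (triple N K Rl).
Local Notation triples := (triples N P K Rl grp).

Definition on_triple {V : Type} (F : forall j, 'I_(K j) -> 'I_(Rl j) -> V) (x : triple) : V :=
  F (tag x) (tagged x).1 (tagged x).2.

Local Notation pr := (on_triple (prob D K Rl grp I f g th0 tau0)).
Local Notation dth := (on_triple (dprob_th D K Rl grp I f g th0 tau0)).
Local Notation dta q := (on_triple (fun j k r => dprob_tau D K Rl grp I g th0 tau0 j k r q)).
Local Notation Pth := (Phi_th D K Rl grp I f g th0 tau0).
Local Notation Pta := (Phi_tau D K Rl grp I f g th0 tau0).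
Local Notation JT := (J_Theta D K Rl grp I f g th0 tau0).
Local Notation JA := (J_A D K Rl grp I f g th0 tau0).

Lemma big_triple (V : nmodType) (Q : pred 'I_N) (F : forall j, 'I_(K j) -> 'I_(Rl j) -> V) :
  \sum_(j | Q j) \sum_(k < K j) \sum_(r < Rl j) F j k r =
  \sum_(x : triple | Q (tag x)) on_triple F x.
Proof.
under eq_bigr => j _ do rewrite pair_big /=.
by rewrite sig_big_dep; apply: eq_bigl => x; rewrite andbT.
Qed.

Definition weighted_mx p {n} (u : triple -> 'cV[R]_n) : 'M[R]_(n, Mp K Rl grp p) :=
  \matrix_(i, c) ((Num.sqrt (pr (enum_val c)))^-1 * u (enum_val c) i 0).

Lemma Phi_th_weighted p : Pth p = weighted_mx p dth.
Proof. by []. Qed.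

Lemma Phi_tau_weighted p : Pta p = weighted_mx p (dta p).
Proof. by []. Qed.

Hypothesis pr_gt0 : forall x, 0 < pr x.

Lemma weighted_mx_gram p n1 n2 (u : triple -> 'cV[R]_n1) (w : triple -> 'cV[R]_n2) :
  weighted_mx p u *m (weighted_mx p w)^T =
  \sum_(x in triples p) (pr x)^-1 *: (u x *m (w x)^T).
Proof.
apply/matrixP => a b; rewrite mxE summxE [RHS]big_enum_val; apply: eq_bigr => c _.
rewrite !mxE big_ord1 !mxE mulrACA -invfM -expr2 sqr_sqrtr //.
exact/ltW/pr_gt0.
Qed.

Lemma mem_triples q x : (x \in triples q) = (grp (tag x) == Some q).
Proof. by apply/idP/idP => [/set_mem|/mem_set]. Qed.

Lemma dprob_tau_eq0 q x : x \notin triples q -> dta q x = 0.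
Proof. by rewrite mem_triples /on_triple /dprob_tau => /negbTE ->. Qed.

Lemma dprob_tau_outer_eq0 q q' x : q != q' -> dta q x *m (dta q' x)^T = 0.
Proof.
move=> ne_qq'; have [xq|/dprob_tau_eq0 ->] := boolP (x \in triples q); last by rewrite mul0mx.
rewrite (@dprob_tau_eq0 q' x) ?trmx0 ?mulmx0 //.
by move: xq; rewrite !mem_triples => /eqP ->; rewrite inj_eq //; apply: Some_inj.
Qed.

Lemma J_A_sum a : JA a = \sum_(x | grp (tag x) == a) (pr x)^-1 *: (dth x *m (dth x)^T).
Proof. exact: big_triple. Qed.

Lemma J_tau_gram p : J_tau D K Rl grp I f g th0 tau0 p = Pta p *m (Pta p)^T.
Proof.
rewrite Phi_tau_weighted weighted_mx_gram /J_tau big_triple.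
by apply: eq_bigl => x; rewrite mem_triples.
Qed.

Lemma psd_J_A a : psd (JA a).
Proof.
rewrite J_A_sum; apply: psd_sum => x _; apply: psdZ; last exact: psd_mulmx_tr.
by rewrite invr_ge0 ltW.
Qed.

Lemma J_Theta_block : JT = block_mx
  (\sum_x (pr x)^-1 *: (dth x *m (dth x)^T))
  (\sum_x (pr x)^-1 *: (dth x *m (mxcol (fun q => dta q x))^T))
  (\sum_x (pr x)^-1 *: (mxcol (fun q => dta q x) *m (dth x)^T))
  (\sum_x (pr x)^-1 *: (mxcol (fun q => dta q x) *m (mxcol (fun q => dta q x))^T)).
Proof.
rewrite /J_Theta big_triple -sum_block_mx; apply: eq_bigr => x _.
by rewrite /on_triple /dprob_Th tr_col_mx mul_col_row scale_block_mx.
Qed.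

Lemma trmx_J_Theta : JT^T = JT.
Proof.
rewrite /J_Theta linear_sum; apply: eq_bigr => j _; rewrite linear_sum.
apply: eq_bigr => k _; rewrite linear_sum; apply: eq_bigr => r _.
by rewrite linearZ /= trmx_mul trmxK.
Qed.

Lemma ulsubmx_J_Theta : ulsubmx JT = JA None + \sum_p Pth p *m (Pth p)^T.
Proof.
rewrite J_Theta_block block_mxKul (sum_option_partition (grp \o tag)) J_A_sum.
congr (_ + _); apply: eq_bigr => p _; rewrite Phi_th_weighted weighted_mx_gram.
by apply: eq_bigl => x; rewrite mem_triples.
Qed.

Lemma dlsubmx_J_Theta : dlsubmx JT = mxcol (fun p => Pta p *m (Pth p)^T).
Proof.
rewrite J_Theta_block block_mxKdl.
rewrite (eq_bigr (fun x => mxcol (fun q => (pr x)^-1 *: (dta q x *m (dth x)^T)))); last first.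
  by move=> x _; rewrite scalemxAl scale_mxcol mxcol_mul; apply: eq_mxcol => q; rewrite scalemxAl.
rewrite -mxcol_sum; apply: eq_mxcol => q.
rewrite Phi_tau_weighted Phi_th_weighted weighted_mx_gram [RHS]big_rmcond // => x.
by move=> /dprob_tau_eq0 ->; rewrite mul0mx scaler0.
Qed.

Lemma ursubmx_J_Theta : ursubmx JT = mxrow (fun p => Pth p *m (Pta p)^T).
Proof.
rewrite -trmx_J_Theta -trmx_dlsub dlsubmx_J_Theta tr_mxcol.
by apply: eq_mxrow => p; rewrite trmx_mul trmxK.
Qed.

Lemma drsubmx_J_Theta : drsubmx JT = mxdiag (fun p => Pta p *m (Pta p)^T).
Proof.
rewrite J_Theta_block block_mxKdr.
rewrite (eq_bigr (fun x => mxblock (fun q q' =>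
    (pr x)^-1 *: (dta q x *m (dta q' x)^T)))); last first.
  move=> x _; rewrite scalemxAl scale_mxcol tr_mxcol mul_mxcol_mxrow.
  by apply: eq_mxblock => q q'; rewrite scalemxAl.
rewrite -mxblock_sum /mxdiag; apply: eq_mxblock => q q'.
case: eqVneq => [<-|ne_qq']; last by apply: big1 => x _; rewrite dprob_tau_outer_eq0 ?scaler0.
rewrite conform_mx_id Phi_tau_weighted weighted_mx_gram [RHS]big_rmcond // => x.
by move=> /dprob_tau_eq0 ->; rewrite mul0mx scaler0.
Qed.

Lemma J_Theta_gram_block : JT = gram_block (JA None) Pth Pta.
Proof.
by rewrite -[LHS]submxK ulsubmx_J_Theta ursubmx_J_Theta dlsubmx_J_Theta drsubmx_J_Theta.
Qed.

End Model.

Theorem theorem2 (R : realType) (N P Dth : nat) (D : 'I_P -> nat)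
  (K Rl : 'I_N -> nat) (grp : 'I_N -> option 'I_P)
  (I : forall j : 'I_N, 'I_(Rl j) -> set R)
  (f : forall j : 'I_N, 'I_(K j) -> 'rV[R]_Dth -> R -> R)
  (g : forall (j : 'I_N) (k : 'I_(K j)) (p : 'I_P),
         'rV[R]_Dth -> 'rV[R]_(D p) -> R -> R)
  (th0 : 'rV[R]_Dth) (tau0 : forall p : 'I_P, 'rV[R]_(D p))
  (* quantizer regions partition R *)
  (HI : forall j, quantizer_regions (I j))
  (* f_jk(. | theta), g_jk(. | theta, tau^(p)) are pdfs *)
  (Hf : forall j k th, grp j = None -> is_pdf (f j k th))
  (Hg : forall j k p th t, grp j = Some p -> is_pdf (g j k p th t))
  (* p_jr^(k) positive and differentiable in the parameters *)
  (Hpos : forall j k r, 0 < prob D K Rl grp I f g th0 tau0 j k r)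
  (Hdiff0 : forall j k r, grp j = None ->
     differentiable (probA0 K Rl I f j k r) th0)
  (Hdiff : forall j k r p, grp j = Some p ->
     differentiable (fun z : 'rV[R]_Dth * 'rV[R]_(D p) =>
                       probA D K Rl I g j k p r z.1 z.2) (th0, tau0 p))
  (* all attacks estimable; J_{A_0} and J_Theta nonsingular *)
  (Htau : forall p, J_tau D K Rl grp I f g th0 tau0 p \in unitmx)
  (HA0 : J_A D K Rl grp I f g th0 tau0 None \in unitmx)
  (HJ : J_Theta D K Rl grp I f g th0 tau0 \in unitmx)
  (* singular value decompositions of Phi_theta^(p) and Phi_tau^(p) *)
  (Uth : forall p, 'M[R]_Dth)
  (Lth : forall p, 'M[R]_(Dth, Mp K Rl grp p))
  (Vth : forall p, 'M[R]_(Mp K Rl grp p))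
  (Uta : forall p, 'M[R]_(D p))
  (Lta : forall p, 'M[R]_(D p, Mp K Rl grp p))
  (Vta : forall p, 'M[R]_(Mp K Rl grp p))
  (Hsvd_th : forall p,
     is_svd (Phi_th D K Rl grp I f g th0 tau0 p) (Uth p) (Lth p) (Vth p))
  (Hsvd_ta : forall p,
     is_svd (Phi_tau D K Rl grp I f g th0 tau0 p) (Uta p) (Lta p) (Vta p)) :
  let J := J_Theta D K Rl grp I f g th0 tau0 in
  let JA0 := J_A D K Rl grp I f g th0 tau0 None in
  loewner_le (ulsubmx (invmx J)) (invmx JA0) /\
  (ulsubmx (invmx J) = invmx JA0 <->
   forall p, range_sub (Vth p *m (Lth p)^T) (Vta p *m (Lta p)^T)).
Proof.
(* Only the positivity of the cell probabilities enters: the claim is about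
   the Gram structure of the Fisher information, not about the densities. *)
move=> J JA0.
have pr_gt0 x : 0 < on_triple (prob D K Rl grp I f g th0 tau0) x := Hpos _ _ _.
set Pth := Phi_th D K Rl grp I f g th0 tau0; set Pta := Phi_tau D K Rl grp I f g th0 tau0.
have uPta p : Pta p *m (Pta p)^T \in unitmx by rewrite -(J_tau_gram pr_gt0).
rewrite /J /JA0 (J_Theta_gram_block pr_gt0) in HJ *; split.
  by apply: loewner_le_ulsubmx_invmx_gram_block => //; apply: psd_J_A.
rewrite ulsubmx_invmx_gram_block_eq //.
have range_sub_svd p : range_sub (Vth p *m (Lth p)^T) (Vta p *m (Lta p)^T) =
    (Pth p <= Pta p)%MS.
  by rewrite /range_sub -(is_svd_eqmx (Hsvd_th p)) -(is_svd_eqmx (Hsvd_ta p)).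
by split=> sub p; [rewrite range_sub_svd | rewrite -range_sub_svd]; apply: sub.
Qed.
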